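(* Let $L_{k-1}>0$, $L_k>0$, $\mu_f>0$, $\tau_{k-1},\tau_k\in(0,1)$, and set $m_k:=\frac{L_k+\mu_f}{L_{k-1}+\mu_f}$, $a_k:=\frac{L_k}{L_{k-1}+\mu_f}$. Assume $$(1-\tau_k)\big[\tau_{k-1}^2+m_k\tau_k\big]\ge a_k\tau_k\qquad\text{and}\qquad m_k\tau_k\tau_{k-1}^2+m_k^2\tau_k^2\ge a_k\tau_{k-1}^2.$$ Then the interval $$\max\Big\{\frac{\tau_{k-1}+\sqrt{\tau_{k-1}^2+4a_k}}{2(1-\tau_{k-1})},\ \frac{a_k\tau_k}{(1-\tau_k)(1-\tau_{k-1})\tau_{k-1}}\Big\}\le\omega_k\le\frac{\tau_{k-1}^2+m_k\tau_k}{\tau_{k-1}(1-\tau_{k-1})}$$ is nonempty, and for any $\omega_k$ in it, any $x^{k-1},x^k,x\in\mathbb{R}^p$, and $\hat x^k:=x^k+\frac{1}{\omega_k}(x^k-x^{k-1})$, $$L_k\tau_k^2\big\|\tfrac1{\tau_k}[\hat x^k-(1-\tau_k)x^k]-x\big\|^2-\mu_f\tau_k(1-\tau_k)\|x^k-x\|^2\le(1-\tau_k)(L_{k-1}+\mu_f)\tau_{k-1}^2\big\|\tfrac1{\tau_{k-1}}[x^k-(1-\tau_{k-1})x^{k-1}]-x\big\|^2.$$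
   Context: Norms are Euclidean on $\mathbb{R}^p$. *)

From mathcomp Require Import all_boot all_order all_algebra.
Set Implicit Arguments. Unset Strict Implicit. Unset Printing Implicit Defensive.
Import Order.TTheory GRing.Theory Num.Theory.
Local Open Scope ring_scope.

Definition enorm (R : rcfType) (p : nat) (v : 'rV[R]_p) : R :=
  Num.sqrt (\sum_(i < p) v ord0 i ^+ 2).

From mathcomp Require Import all_boot all_order all_algebra.
From mathcomp Require Import ring lra.
Set Implicit Arguments. Unset Strict Implicit.
Import Order.TTheory GRing.Theory Num.Theory.
Local Open Scope ring_scope.

(* Normalise by d := L_{k-1} + mu_f: write a := L_k/d, c := mu_f/d (so that
   m_k = a + c), s := tau_k, t := tau_{k-1} and y := (1 - t) omega_k.
   1. Three polynomial conditions
        y^2 - t y - a >= 0,   (1 - s) t y >= a s,   t^2 + (a + c) s >= t y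
      imply nonnegativity of the "margin" c s ((1 - s) y^2 - a) - a (s y - t)^2,
      by an explicit positivity certificate ([margin_nonneg]).
   2. A nonnegative margin makes a two-variable quadratic form nonnegative
      ([quadratic_bound]); rescaled by d / y^2 this is exactly the claimed
      inequality in one real coordinate ([scalar_step]).  Since the squared
      Euclidean norm is a sum of coordinate squares, the vector inequality
      is the sum of the coordinate ones ([vector_step]).
   3. The three conditions of step 1 say that omega_k lies above the root
      bound, above the ratio bound, and below the upper bound of the window
      ([root_condition], [window_margin]).
   4. The two hypotheses of the lemma say that the upper end of the window
      dominates both lower ends ([root_bound_le_hi], [ratio_bound_le_hi]),
      so the window contains its upper end. *)

(* The quantity whose sign governs the one-step inequality. *)
Definition margin (R : realFieldType) (a c s t y : R) : R :=
  c * s * ((1 - s) * y ^+ 2 - a) - a * (s * y - t) ^+ 2.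

(* Positivity certificate: the margin is a combination with nonnegative
   coefficients of the three window conditions. *)
Lemma margin_nonneg (R : realFieldType) (a c s t y : R) :
  s < 1 ->
  0 <= y ^+ 2 - t * y - a -> 0 <= (1 - s) * t * y - a * s ->
  0 <= t ^+ 2 + (a + c) * s - t * y ->
  0 <= margin a c s t y.
Proof.
move=> s_lt1 g1 g2 g3.
have -> : margin a c s t y =
  (t ^+ 2 + (a + c) * s - t * y)
    * ((1 - s) * (y ^+ 2 - t * y - a) + ((1 - s) * t * y - a * s))
  + (y ^+ 2 - t * y - a) * ((1 - s) * t * y - a * s) by rewrite /margin; ring.
apply: addr_ge0; apply: mulr_ge0 => //.
by apply: addr_ge0 => //; apply: mulr_ge0 => //; lra.
Qed.

Lemma quadratic_bound (R : realFieldType) (a c s t y u z : R) :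
  0 < c -> 0 < s -> s < 1 -> 0 < y -> 0 <= margin a c s t y ->
  a * ((s * y - t) * u + z) ^+ 2
    <= (1 - s) * y ^+ 2 * z ^+ 2 + c * s * (1 - s) * y ^+ 2 * u ^+ 2.
Proof.
move=> c_gt0 s_gt0 s_lt1 y_gt0 margin_ge0.
set N := s * y - t; set X := c * s * (1 - s) * y ^+ 2; set Y := (1 - s) * y ^+ 2.
have X_gt0 : 0 < X by rewrite /X; do 2 apply: mulr_gt0 => //; nra.
have Y_ge0 : 0 <= Y by rewrite /Y; apply: mulr_ge0; [lra | nra].
have weight_gt0 : 0 < N ^+ 2 * Y + X by have := sqr_ge0 N; nra.
have sos : (N ^+ 2 * Y + X) * (Y * z ^+ 2 + X * u ^+ 2 - a * (N * u + z) ^+ 2)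
    = Y * margin a c s t y * (N * u + z) ^+ 2 + (N * Y * z - X * u) ^+ 2.
  by rewrite /margin /X /Y /N; ring.
rewrite -subr_ge0 -(pmulr_rge0 _ weight_gt0) sos.
apply: addr_ge0; last exact: sqr_ge0.
by apply: mulr_ge0; [apply: mulr_ge0 | exact: sqr_ge0].
Qed.

(* The one-step inequality for a single real coordinate, with L = a d,
   mu = c d and y = (1 - t) w. *)
Lemma scalar_step (R : realFieldType) (L mu d s t w xm xk x : R) :
  0 < L -> 0 < mu -> 0 < d -> 0 < t -> t < 1 -> 0 < s -> s < 1 ->
  0 < (1 - t) * w -> 0 <= margin (L / d) (mu / d) s t ((1 - t) * w) ->
  L * s ^+ 2 * (s^-1 * (xk + w^-1 * (xk - xm) - (1 - s) * xk) - x) ^+ 2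
    - mu * s * (1 - s) * (xk - x) ^+ 2
  <= (1 - s) * d * t ^+ 2 * (t^-1 * (xk - (1 - t) * xm) - x) ^+ 2.
Proof.
move=> L_gt0 mu_gt0 d_gt0 t_gt0 t_lt1 s_gt0 s_lt1 y_gt0 margin_ge0.
set y := (1 - t) * w in y_gt0 margin_ge0.
have w_neq0 : w != 0 by apply: contraTneq y_gt0; rewrite /y => ->; rewrite mulr0 ltxx.
have /and5P[t1_neq0 s_neq0 t_neq0 d_neq0 y_neq0] :
  [&& 1 - t != 0, s != 0, t != 0, d != 0 & y != 0] by rewrite !gt_eqF //; lra.
set u := xk - x; set z := (xk - x) - (1 - t) * (xm - x).
have scale_ge0 : 0 <= d / y ^+ 2 by apply: divr_ge0; [lra | exact: sqr_ge0].
have lhsE : L * s ^+ 2 * (s^-1 * (xk + w^-1 * (xk - xm) - (1 - s) * xk) - x) ^+ 2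
    = d / y ^+ 2 * (L / d * ((s * y - t) * u + z) ^+ 2).
  by rewrite /y /u /z; field; rewrite w_neq0 t1_neq0 s_neq0 d_neq0.
have rhsE : (1 - s) * d * t ^+ 2 * (t^-1 * (xk - (1 - t) * xm) - x) ^+ 2
      + mu * s * (1 - s) * u ^+ 2
    = d / y ^+ 2 * ((1 - s) * y ^+ 2 * z ^+ 2
                    + mu / d * s * (1 - s) * y ^+ 2 * u ^+ 2).
  by rewrite /u /z; field; rewrite t_neq0 d_neq0 y_neq0.
rewrite lerBlDr lhsE rhsE; apply: ler_wpM2l => //.
exact: quadratic_bound (divr_gt0 mu_gt0 d_gt0) s_gt0 s_lt1 y_gt0 margin_ge0.
Qed.

Lemma enorm_sqr (R : rcfType) (p : nat) (v : 'rV[R]_p) :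
  enorm v ^+ 2 = \sum_(i < p) v ord0 i ^+ 2.
Proof. by rewrite sqr_sqrtr //; apply: sumr_ge0 => i _; exact: sqr_ge0. Qed.

Lemma vector_step (R : rcfType) (L mu d s t w : R) (p : nat)
    (xm xk x : 'rV[R]_p) :
  0 < L -> 0 < mu -> 0 < d -> 0 < t -> t < 1 -> 0 < s -> s < 1 ->
  0 < (1 - t) * w -> 0 <= margin (L / d) (mu / d) s t ((1 - t) * w) ->
  L * s ^+ 2 * enorm (s^-1 *: (xk + w^-1 *: (xk - xm) - (1 - s) *: xk) - x) ^+ 2
    - mu * s * (1 - s) * enorm (xk - x) ^+ 2
  <= (1 - s) * d * t ^+ 2 * enorm (t^-1 *: (xk - (1 - t) *: xm) - x) ^+ 2.
Proof.
move=> *; rewrite !enorm_sqr !mulr_sumr -sumrB; apply: ler_sum => i _.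
by rewrite !mxE; exact: scalar_step.
Qed.

Lemma sqrt_le_iff (R : rcfType) (b x : R) :
  0 <= b -> 0 <= x -> (Num.sqrt b <= x) = (b <= x ^+ 2).
Proof. by move=> b_ge0 x_ge0; rewrite -ler_sqr ?nnegrE ?sqrtr_ge0 // sqr_sqrtr. Qed.

(* omega lies above the root bound iff y = (1 - t) omega lies above the
   positive root (t + sqrt (t^2 + 4 a)) / 2 of y^2 - t y - a. *)
Lemma root_condition (R : rcfType) (a t w : R) :
  0 < a -> t < 1 ->
  (t + Num.sqrt (t ^+ 2 + 4 * a)) / (2 * (1 - t)) <= w ->
  0 <= ((1 - t) * w) ^+ 2 - t * ((1 - t) * w) - a.
Proof.
move=> a_gt0 t_lt1; rewrite ler_pdivrMr; last lra.
move=> root_le; have S_le : Num.sqrt (t ^+ 2 + 4 * a) <= 2 * ((1 - t) * w) - t by lra.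
have x_ge0 : 0 <= 2 * ((1 - t) * w) - t by apply: le_trans S_le; exact: sqrtr_ge0.
by move: S_le; rewrite sqrt_le_iff //; nra.
Qed.

Lemma window_margin (R : rcfType) (a c s t w : R) :
  0 < a -> 0 < s -> s < 1 -> 0 < t -> t < 1 ->
  (t + Num.sqrt (t ^+ 2 + 4 * a)) / (2 * (1 - t)) <= w ->
  a * s / ((1 - s) * (1 - t) * t) <= w ->
  w <= (t ^+ 2 + (a + c) * s) / (t * (1 - t)) ->
  0 < (1 - t) * w /\ 0 <= margin a c s t ((1 - t) * w).
Proof.
move=> a_gt0 s_gt0 s_lt1 t_gt0 t_lt1.
move=> /(root_condition a_gt0 t_lt1) g1 ratio_le hi_le.
have g2 : 0 <= (1 - s) * t * ((1 - t) * w) - a * s.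
  by move: ratio_le; rewrite ler_pdivrMr; [nra | apply: mulr_gt0; nra].
have g3 : 0 <= t ^+ 2 + (a + c) * s - t * ((1 - t) * w).
  by move: hi_le; rewrite ler_pdivlMr; nra.
split; last exact: margin_nonneg.
have as_gt0 : 0 < a * s by exact: mulr_gt0.
have st_gt0 : 0 < (1 - s) * t by apply: mulr_gt0; lra.
by rewrite -(pmulr_rgt0 _ st_gt0); lra.
Qed.

Lemma root_bound_le_hi (R : rcfType) (a m s t : R) :
  0 < a -> 0 < m -> 0 < s -> 0 < t -> t < 1 ->
  m * s * t ^+ 2 + m ^+ 2 * s ^+ 2 >= a * t ^+ 2 ->
  (t + Num.sqrt (t ^+ 2 + 4 * a)) / (2 * (1 - t))
    <= (t ^+ 2 + m * s) / (t * (1 - t)).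
Proof.
move=> a_gt0 m_gt0 s_gt0 t_gt0 t_lt1 hyp.
rewrite ler_pdivrMr; last lra.
have -> : (t ^+ 2 + m * s) / (t * (1 - t)) * (2 * (1 - t))
    = 2 * (t ^+ 2 + m * s) / t by field; rewrite !gt_eqF //; lra.
rewrite ler_pdivlMr //.
suff : Num.sqrt (t ^+ 2 + 4 * a) <= (t ^+ 2 + 2 * m * s) / t by rewrite ler_pdivlMr //; lra.
rewrite sqrt_le_iff; [ | nra | apply: divr_ge0; nra].
by rewrite expr_div_n ler_pdivlMr ?exprn_gt0 //; nra.
Qed.

Lemma ratio_bound_le_hi (R : realFieldType) (a m s t : R) :
  s < 1 -> 0 < t -> t < 1 ->
  (1 - s) * (t ^+ 2 + m * s) >= a * s ->
  a * s / ((1 - s) * (1 - t) * t) <= (t ^+ 2 + m * s) / (t * (1 - t)).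
Proof.
move=> s_lt1 t_gt0 t_lt1 hyp; rewrite ler_pdivrMr; last by apply: mulr_gt0; nra.
have -> : (t ^+ 2 + m * s) / (t * (1 - t)) * ((1 - s) * (1 - t) * t)
    = (1 - s) * (t ^+ 2 + m * s) by field; rewrite !gt_eqF //; lra.
exact: hyp.
Qed.

Theorem lemma7 (R : rcfType) (Lkm1 Lk muf tkm1 tk : R) :
  0 < Lkm1 -> 0 < Lk -> 0 < muf ->
  0 < tkm1 < 1 -> 0 < tk < 1 ->
  let mk := (Lk + muf) / (Lkm1 + muf) in
  let ak := Lk / (Lkm1 + muf) in
  (1 - tk) * (tkm1 ^+ 2 + mk * tk) >= ak * tk ->
  mk * tk * tkm1 ^+ 2 + mk ^+ 2 * tk ^+ 2 >= ak * tkm1 ^+ 2 ->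
  let lo := Num.max ((tkm1 + Num.sqrt (tkm1 ^+ 2 + 4 * ak)) / (2 * (1 - tkm1)))
                    (ak * tk / ((1 - tk) * (1 - tkm1) * tkm1)) in
  let hi := (tkm1 ^+ 2 + mk * tk) / (tkm1 * (1 - tkm1)) in
  (exists wk : R, lo <= wk <= hi) /\
  (forall wk : R, lo <= wk <= hi ->
   forall (p : nat) (xkm1 xk x : 'rV[R]_p),
   let xhat := xk + wk^-1 *: (xk - xkm1) in
   Lk * tk ^+ 2 * enorm (tk^-1 *: (xhat - (1 - tk) *: xk) - x) ^+ 2
     - muf * tk * (1 - tk) * enorm (xk - x) ^+ 2
   <= (1 - tk) * (Lkm1 + muf) * tkm1 ^+ 2
        * enorm (tkm1^-1 *: (xk - (1 - tkm1) *: xkm1) - x) ^+ 2).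
Proof.
move=> L1_gt0 L_gt0 mu_gt0 /andP[t_gt0 t_lt1] /andP[s_gt0 s_lt1] mk ak ratio_hyp root_hyp lo hi.
have d_gt0 : 0 < Lkm1 + muf by lra.
have a_gt0 : 0 < ak := divr_gt0 L_gt0 d_gt0.
have mk_split : mk = ak + muf / (Lkm1 + muf) by rewrite /mk /ak mulrDl.
have mk_gt0 : 0 < mk by rewrite mk_split; apply: addr_gt0 => //; exact: divr_gt0.
split.
  exists hi; rewrite lexx andbT ge_max.
  by rewrite root_bound_le_hi ?ratio_bound_le_hi.
move=> wk /andP[]; rewrite ge_max => /andP[root_le ratio_le] hi_le p xkm1 xk x /=.
rewrite /hi mk_split in hi_le.
have [y_gt0 margin_ge0] := window_margin a_gt0 s_gt0 s_lt1 t_gt0 t_lt1 root_le ratio_le hi_le.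
exact: vector_step.
Qed.
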